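(* For every formula with placeholders $\varphi$ and every formula $\psi$: $\varphi[\mathbf{GF}\psi] \equiv (\mathbf{GF}\psi \wedge \varphi[\mathbf{true}]) \vee \varphi[\mathbf{false}]$ and $\varphi[\mathbf{FG}\psi] \equiv (\mathbf{FG}\psi \wedge \varphi[\mathbf{true}]) \vee \varphi[\mathbf{false}]$.
   Context: Fix a finite set $Ap$ of atomic propositions. A word is an infinite sequence $w = w[0]w[1]\dots$ of letters of $2^{Ap}$, and $w_i$ denotes the suffix $w[i]w[i+1]\dots$. Formulas are generated by $\varphi ::= \mathbf{true} \mid \mathbf{false} \mid a \mid \neg a \mid \varphi\wedge\varphi \mid \varphi\vee\varphi \mid \mathbf{X}\varphi \mid \varphi\,\mathbf{U}\,\varphi \mid \varphi\,\mathbf{W}\,\varphi \mid \mathbf{GF}\varphi \mid \mathbf{FG}\varphi$ ($a\in Ap$), where $\mathbf{GF}$, $\mathbf{FG}$ are single unary operators. Semantics: $w\models a$ iff $a\in w[0]$, $w\models\neg a$ iff $a\notin w[0]$, Boolean constants and connectives as usual; $w\models\mathbf{X}\varphi$ iff $w_1\models\varphi$; $w\models\varphi\mathbf{U}\psi$ iff $\exists k$: $w_k\models\psi$ and $\forall j<k$: $w_j\models\varphi$; $w\models\varphi\mathbf{W}\psi$ iff ($\forall k$: $w_k\models\varphi$) or $w\models\varphi\mathbf{U}\psi$; $w\models\mathbf{GF}\varphi$ iff $w_k\models\varphi$ for infinitely many $k$; $w\models\mathbf{FG}\varphi$ iff $\exists n\,\forall k\geq n$: $w_k\models\varphi$. $\varphi\equiv\psi$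 means both formulas are satisfied by exactly the same words. A formula with placeholders is a formula over $Ap\cup\{\star\}$, where $\star$ is a special fresh atomic proposition, with at least one occurrence of $\star$ and no occurrence of $\neg\star$; for such $\varphi$ and a formula $\psi$, $\varphi[\psi]$ denotes the result of substituting $\psi$ for every occurrence of $\star$. *)

From mathcomp Require Import all_boot.
Set Implicit Arguments. Unset Strict Implicit. Unset Printing Implicit Defensive.

(* LTL formulas in negation normal form over atomic propositions of type A. *)
Inductive formula (A : Type) : Type :=
| FTrue | FFalse
| FAtom of A
| FNAtom of A
| FAnd of formula A & formula A
| FOr of formula A & formula A
| FX of formula A
| FU of formula A & formula A
| FW of formula A & formula A
| FGF of formula A
| FFG of formula A.

Arguments FTrue {A}. Arguments FFalse {A}.

(* A word over 2^A: w i is the set of atoms true at position i. *)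
Definition word (A : finType) := nat -> {set A}.

Definition suffix (A : finType) (w : word A) (i : nat) : word A := fun k => w (i + k).

Fixpoint sat (A : finType) (w : word A) (f : formula A) {struct f} : Prop :=
  match f with
  | FTrue => True
  | FFalse => False
  | FAtom a => a \in w 0
  | FNAtom a => a \notin w 0
  | FAnd f1 f2 => sat w f1 /\ sat w f2
  | FOr f1 f2 => sat w f1 \/ sat w f2
  | FX f1 => sat (suffix w 1) f1
  | FU f1 f2 => exists k, sat (suffix w k) f2 /\ forall j, j < k -> sat (suffix w j) f1
  | FW f1 f2 => (forall k, sat (suffix w k) f1) \/
                (exists k, sat (suffix w k) f2 /\ forall j, j < k -> sat (suffix w j) f1)
  | FGF f1 => forall n, exists k, n <= k /\ sat (suffix w k) f1
  | FFG f1 => exists n, forall k, n <= k -> sat (suffix w k) f1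
  end.

Definition fequiv (A : finType) (f g : formula A) : Prop :=
  forall w : word A, sat w f <-> sat w g.

(* Formulas with placeholders: formulas over option A, where None is the
   fresh atom star. *)
Fixpoint star_occurs (A : Type) (f : formula (option A)) : bool :=
  match f with
  | FTrue | FFalse => false
  | FAtom a => if a is None then true else false
  | FNAtom _ => false
  | FAnd f1 f2 | FOr f1 f2 | FU f1 f2 | FW f1 f2 => star_occurs f1 || star_occurs f2
  | FX f1 | FGF f1 | FFG f1 => star_occurs f1
  end.

Fixpoint no_neg_star (A : Type) (f : formula (option A)) : bool :=
  match f with
  | FTrue | FFalse | FAtom _ => true
  | FNAtom a => if a is None then false else true
  | FAnd f1 f2 | FOr f1 f2 | FU f1 f2 | FW f1 f2 => no_neg_star f1 && no_neg_star f2
  | FX f1 | FGF f1 | FFG f1 => no_neg_star f1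
  end.

Definition placeholder_formula (A : Type) (f : formula (option A)) : Prop :=
  star_occurs f /\ no_neg_star f.

(* phi[psi]: replace each star by psi.  A (non-star) negated star cannot occur
   in a placeholder formula; the FNAtom None case is mapped to FTrue arbitrarily. *)
Fixpoint subst (A : Type) (f : formula (option A)) (psi : formula A) : formula A :=
  match f with
  | FTrue => FTrue
  | FFalse => FFalse
  | FAtom (Some a) => FAtom a
  | FAtom None => psi
  | FNAtom (Some a) => FNAtom a
  | FNAtom None => FTrue
  | FAnd f1 f2 => FAnd (subst f1 psi) (subst f2 psi)
  | FOr f1 f2 => FOr (subst f1 psi) (subst f2 psi)
  | FX f1 => FX (subst f1 psi)
  | FU f1 f2 => FU (subst f1 psi) (subst f2 psi)
  | FW f1 f2 => FW (subst f1 psi) (subst f2 psi)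
  | FGF f1 => FGF (subst f1 psi)
  | FFG f1 => FFG (subst f1 psi)
  end.

(** Since the placeholder never occurs negated, [phi[.]] is monotone in its
    argument, pointwise on the suffixes of a word.  The truth of [GF psi] and
    [FG psi] does not change along a word, so on a word satisfying it the
    placeholder agrees with [true] on every suffix, and otherwise with
    [false]; monotonicity also gives [phi[false] -> phi[true]], which absorbs
    the remaining disjunct. *)
From Stdlib Require Import FunctionalExtensionality Classical_Prop.
From Pilot Require Import Defs.
From mathcomp Require Import all_boot zify.

(* [all_boot] exports [seq.suffix], which would shadow the word suffix. *)
Local Notation suffix := Defs.suffix.

Section Substitution.

Variable A : finType.
Implicit Types (w : word A) (p q : formula A) (phi : formula (option A)).

Lemma suffixD w i j : suffix (suffix w i) j = suffix w (i + j).
Proof. by apply: functional_extensionality => k; rewrite /suffix addnA. Qed.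

Lemma suffix0 w : suffix w 0 = w.
Proof. exact: functional_extensionality. Qed.

Definition entails_on w p q := forall k, sat (suffix w k) p -> sat (suffix w k) q.

Lemma entails_on_suffix w p q i : entails_on w p q -> entails_on (suffix w i) p q.
Proof. by move=> Hpq k; rewrite suffixD; apply: Hpq. Qed.

Arguments entails_on_suffix {w p q} i.

Lemma sat_subst_mono phi p q w :
  no_neg_star phi -> entails_on w p q -> sat w (subst phi p) -> sat w (subst phi q).
Proof.
elim: phi w => [||[a|]|[a|]|f1 IH1 f2 IH2|f1 IH1 f2 IH2|f IH|f1 IH1 f2 IH2
               |f1 IH1 f2 IH2|f IH|f IH] w //=.
- by move=> _ /(_ 0); rewrite suffix0.
- by move=> /andP[n1 n2] Hpq [h1 h2]; split; [apply: IH1 h1 | apply: IH2 h2].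
- by move=> /andP[n1 n2] Hpq [h1|h2]; [left; apply: IH1 h1 | right; apply: IH2 h2].
- by move=> nf /(entails_on_suffix 1); apply: IH.
- move=> /andP[n1 n2] Hpq [k [hk hj]]; exists k; split.
    exact: IH2 (entails_on_suffix k Hpq) hk.
  by move=> j jk; apply: IH1 (entails_on_suffix j Hpq) (hj j jk).
- move=> /andP[n1 n2] Hpq [hall|[k [hk hj]]].
    by left=> k; apply: IH1 (entails_on_suffix k Hpq) (hall k).
  right; exists k; split; first exact: IH2 (entails_on_suffix k Hpq) hk.
  by move=> j jk; apply: IH1 (entails_on_suffix j Hpq) (hj j jk).
- move=> nf Hpq h n; have [k [nk hk]] := h n.
  by exists k; split=> //; apply: IH (entails_on_suffix k Hpq) hk.
- move=> nf Hpq [n h]; exists n => k nk.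
  exact: IH (entails_on_suffix k Hpq) (h k nk).
Qed.

Lemma sat_subst_equiv phi p q w :
  no_neg_star phi -> (forall k, sat (suffix w k) p <-> sat (suffix w k) q) ->
  sat w (subst phi p) <-> sat w (subst phi q).
Proof. by move=> nphi Hpq; split; apply: sat_subst_mono => // k /Hpq. Qed.

Lemma sat_subst_false_true phi w :
  no_neg_star phi -> sat w (subst phi FFalse) -> sat w (subst phi FTrue).
Proof. by move=> nphi; apply: sat_subst_mono. Qed.

Definition suffix_invariant p := forall w k, sat (suffix w k) p <-> sat w p.

Lemma subst_suffix_invariant phi p :
  no_neg_star phi -> suffix_invariant p ->
  fequiv (subst phi p) (FOr (FAnd p (subst phi FTrue)) (subst phi FFalse)).
Proof.
move=> nphi inv_p w /=; have [wp|wNp] := classic (sat w p).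
- have -> : sat w (subst phi p) <-> sat w (subst phi FTrue).
    by apply: sat_subst_equiv => // k; rewrite inv_p.
  by have := @sat_subst_false_true phi w nphi; tauto.
- have -> : sat w (subst phi p) <-> sat w (subst phi FFalse).
    by apply: sat_subst_equiv => // k; rewrite inv_p.
  tauto.
Qed.

Lemma suffix_invariant_GF p : suffix_invariant (FGF p).
Proof.
move=> w k /=; split=> h n.
- have [m [nm hm]] := h n.
  by exists (k + m); rewrite -suffixD; split=> //; lia.
- have [m [nm hm]] := h (k + n).
  have km : k <= m by lia.
  by exists (m - k); rewrite suffixD subnKC //; split=> //; lia.
Qed.

Lemma suffix_invariant_FG p : suffix_invariant (FFG p).
Proof.
move=> w k /=; split=> [[n h]|[n h]].
- exists (k + n) => m knm; have km : k <= m by lia.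
  by have := h (m - k); rewrite suffixD subnKC //; apply; lia.
- by exists n => m nm; rewrite suffixD; apply: h; lia.
Qed.

End Substitution.

Theorem lemma2 (Ap : finType) (phi : formula (option Ap)) (psi : formula Ap) :
  placeholder_formula phi ->
  fequiv (subst phi (FGF psi)) (FOr (FAnd (FGF psi) (subst phi FTrue)) (subst phi FFalse)) /\
  fequiv (subst phi (FFG psi)) (FOr (FAnd (FFG psi) (subst phi FTrue)) (subst phi FFalse)).
Proof.
move=> [_ nphi]; split; apply: subst_suffix_invariant => //.
- exact: suffix_invariant_GF.
- exact: suffix_invariant_FG.
Qed.
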